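(* There exists a universal constant $K_0$ such that for all positive integers $s$, $$\sum_{0\le k\le s/2}(1+t_k^2)\,p_k\le K_0.$$
   Context: For a positive integer $s$ and integers $0\le k\le s/2$, let $p_k=\binom{s-k}{k}\big/\sum_{0\le j\le s/2}\binom{s-j}{j}$ (so $p_k\ge0$ and $\sum_k p_k=1$; the denominator is the Fibonacci number $Fib_{s+1}$). Let $c_0=(5-\sqrt5)/10$, $k_0=\lfloor c_0 s\rfloor$, and $t_k=5^{3/4}(k-k_0)/\sqrt{s}$. *)

From Stdlib Require Import Reals Lra Lia ZArith.
Open Scope R_scope.

Definition floorR (x : R) : Z := (up x - 1)%Z.

Definition binomR (n k : nat) : R := Binomial.C n k.

(* denominator: sum_{0<=j<=s/2} C(s-j, j)  (= Fib_{s+1}); s/2 is floor division *)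
Definition denom (s : nat) : R := sum_f_R0 (fun j => binomR (s - j) j) (Nat.div s 2).

Definition p_k (s k : nat) : R := binomR (s - k) k / denom s.

Definition c0 : R := (5 - sqrt 5) / 10.

Definition k0 (s : nat) : Z := floorR (c0 * INR s).

Definition t_k (s k : nat) : R :=
  Rpower 5 (3/4) * (INR k - IZR (k0 s)) / sqrt (INR s).

From Stdlib Require Import Reals Lra Lia Psatz.
Open Scope R_scope.

(* Write a_k = C(s-k,k) and r = c0 s.  The ratio a_(k+1)/a_k = (s-2k)(s-2k-1)/((k+1)(s-k))
   turns the sum over k of (k-r) k (s-k+1) a_k - (k+1-r) (s-2k)(s-2k-1) a_k into a
   telescoping sum equal to 0.  Because c0 is a root of 5c^2 - 5c + 1, each summand is at
   least (s (k-r)^2 - 2 s^2) a_k, hence sum (k-r)^2 p_k <= 2 s.  As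
   t_k^2 <= 50 ((k-r)^2 + 1) / s, the sum in the theorem is at most 1 + 50 + 100. *)

(* The bound on k matters: [Binomial.C n k] is not 0 when k > n. *)
Lemma binomR_diag_succ s k : (2 * k + 2 <= s)%nat ->
  INR (S k) * (INR s - INR k) * binomR (s - S k) (S k) =
  (INR s - 2 * INR k) * (INR s - 2 * INR k - 1) * binomR (s - k) k.
Proof.
  intros Hk; unfold binomR.
  set (n := (s - S k)%nat).
  assert (Hsk : (s - k)%nat = S n) by (unfold n; lia).
  assert (Hn : INR n = INR s - INR k - 1).
  { unfold n; rewrite minus_INR, S_INR by lia; ring. }
  assert (Hnk : INR (n - k) = INR s - 2 * INR k - 1).
  { rewrite minus_INR, Hn by (unfold n; lia); ring. }
  assert (HSnk : INR (S n - k) = INR s - 2 * INR k).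
  { rewrite minus_INR, S_INR, Hn by (unfold n; lia); ring. }
  rewrite Hsk, pascal_step2, pascal_step3 by (unfold n; lia).
  rewrite Hnk, HSnk, !S_INR, Hn.
  assert (0 < INR s - 2 * INR k - 1).
  { rewrite <- Hnk; apply lt_0_INR; unfold n; lia. }
  assert (0 < INR k + 1) by (pose proof (pos_INR k); lra).
  field; lra.
Qed.

Lemma sum_f_R0_telescope (b c : nat -> R) m :
  (forall k, (k < m)%nat -> c k = b (S k)) ->
  sum_f_R0 (fun k => b k - c k) m = b O - c m.
Proof.
  induction m as [|m IH]; intros Hbc; simpl; [ring|].
  rewrite IH by (intros; apply Hbc; lia).
  rewrite (Hbc m) by lia; ring.
Qed.

Lemma binomR_nonneg n k : 0 <= binomR n k.
Proof.
  unfold binomR, Binomial.C.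
  apply Rle_mult_inv_pos; [apply pos_INR|].
  apply Rmult_lt_0_compat; apply INR_fact_lt_0.
Qed.

Lemma binomR_0_r n : binomR n 0 = 1.
Proof.
  unfold binomR, Binomial.C. rewrite Nat.sub_0_r. simpl.
  field. apply INR_fact_neq_0.
Qed.

Lemma denom_pos s : 0 < denom s.
Proof.
  unfold denom.
  assert (H0 : binomR (s - 0) 0 = 1) by apply binomR_0_r.
  induction (Nat.div s 2) as [|m IH]; simpl; [lra|].
  pose proof (binomR_nonneg (s - S m) (S m)); lra.
Qed.

Lemma c0_quadratic : 5 * c0 ^ 2 - 5 * c0 + 1 = 0.
Proof.
  unfold c0. assert (sqrt 5 * sqrt 5 = 5) by (apply sqrt_sqrt; lra). nra.
Qed.

Lemma c0_bounds : 0 <= c0 <= 3 / 10.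
Proof.
  unfold c0. assert (sqrt 5 * sqrt 5 = 5) by (apply sqrt_sqrt; lra).
  pose proof (sqrt_pos 5). split; nra.
Qed.

Lemma k0_bounds s : c0 * INR s - 1 < IZR (k0 s) <= c0 * INR s.
Proof.
  unfold k0, floorR. rewrite minus_IZR. destruct (archimed (c0 * INR s)). simpl. lra.
Qed.

(* The summand is b_k - b_(k+1) for b_k = (k-r) k (s-k+1) a_k, except for the last one,
   which is b_k because s - 2 (s/2) is 0 or 1. *)
Lemma sum_binomR_drift s r :
  sum_f_R0 (fun k =>
    ((INR k - r) * INR k * (INR s - INR k + 1)
     - (INR k - r + 1) * (INR s - 2 * INR k) * (INR s - 2 * INR k - 1))
    * binomR (s - k) k) (Nat.div s 2) = 0.
Proof.
  set (m := Nat.div s 2).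
  set (b := fun k => (INR k - r) * INR k * (INR s - INR k + 1) * binomR (s - k) k).
  set (c := fun k => (INR k - r + 1) * (INR s - 2 * INR k) * (INR s - 2 * INR k - 1)
                     * binomR (s - k) k).
  assert (Hm : (s = 2 * m \/ s = 2 * m + 1)%nat).
  { pose proof (Nat.div_mod s 2); pose proof (Nat.mod_upper_bound s 2); unfold m; lia. }
  transitivity (sum_f_R0 (fun k => b k - c k) m).
  { apply sum_eq; intros; unfold b, c; ring. }
  rewrite sum_f_R0_telescope.
  - assert (Hcm : (INR s - 2 * INR m) * (INR s - 2 * INR m - 1) = 0).
    { destruct Hm as [Hs | Hs]; rewrite Hs, ?plus_INR, mult_INR; simpl; ring. }
    unfold b, c; simpl. rewrite Rmult_assoc with (r2 := INR s - 2 * INR m), Hcm. ring.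
  - intros k Hk. unfold b, c.
    transitivity ((INR k - r + 1) *
      ((INR s - 2 * INR k) * (INR s - 2 * INR k - 1) * binomR (s - k) k)); [ring|].
    rewrite <- binomR_diag_succ by lia.
    rewrite !S_INR; ring.
Qed.

(* Since 5 c0^2 - 5 c0 + 1 = 0, the cubic part of the right side is
   5 (x-r)^2 (S-r-x) >= S (x-r)^2. *)
Lemma drift_coeff_lower_bound S x : 0 <= x -> 2 * x <= S ->
  let r := c0 * S in
  S * (x - r) ^ 2 - 2 * S ^ 2 <=
  (x - r) * x * (S - x + 1) - (x - r + 1) * (S - 2 * x) * (S - 2 * x - 1).
Proof.
  intros Hx HxS r.
  pose proof c0_bounds as Hc0.
  assert (Hr : 0 <= r <= 3 / 10 * S) by (unfold r; nra).
  replace ((x - r) * x * (S - x + 1) - (x - r + 1) * (S - 2 * x) * (S - 2 * x - 1))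
    with (5 * (x - r) ^ 2 * (S - r - x) + (x - r) * (S - x) - (S - 2 * x) * (S - 2 * x - 1)
          - (x - r) * S ^ 2 * (5 * c0 ^ 2 - 5 * c0 + 1)) by (unfold r; ring).
  rewrite c0_quadratic.
  assert (S * (x - r) ^ 2 <= 5 * (x - r) ^ 2 * (S - r - x)).
  { assert (0 <= (x - r) ^ 2 * (5 * (S - r - x) - S))
      by (apply Rmult_le_pos; [apply pow2_ge_0 | lra]).
    lra. }
  assert (- S ^ 2 <= (x - r) * (S - x)).
  { assert (0 <= (x - r + S) * (S - x)) by (apply Rmult_le_pos; lra). nra. }
  assert ((S - 2 * x) * (S - 2 * x - 1) <= S ^ 2).
  { assert (0 <= (S - 2 * x) * (2 * x)) by (apply Rmult_le_pos; lra). nra. }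
  lra.
Qed.

Lemma second_moment_le s : (0 < s)%nat ->
  sum_f_R0 (fun k => (INR k - c0 * INR s) ^ 2 * binomR (s - k) k) (Nat.div s 2)
  <= 2 * INR s * denom s.
Proof.
  intros Hs.
  set (m := Nat.div s 2). set (S := INR s). set (r := c0 * S).
  set (Q := sum_f_R0 (fun k => (INR k - r) ^ 2 * binomR (s - k) k) m).
  assert (HS : 0 < S) by (apply lt_0_INR; lia).
  assert (Hbound : S * Q + (- 2 * S ^ 2) * denom s <= 0).
  { rewrite <- (sum_binomR_drift s r).
    unfold Q, denom; fold m. rewrite !scal_sum, <- plus_sum.
    apply sum_Rle; intros k Hk.
    assert (H2k : 2 * INR k <= S).
    { unfold S; change 2 with (INR 2); rewrite <- mult_INR. apply le_INR.
      pose proof (Nat.Div0.mul_div_le s 2); unfold m in Hk; lia. }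
    pose proof (drift_coeff_lower_bound S (INR k) (pos_INR k) H2k) as Hdrift.
    pose proof (binomR_nonneg (s - k) k).
    fold r in Hdrift. fold S. nra. }
  apply Rmult_le_reg_l with S; [exact HS|]. nra.
Qed.

Lemma p_k_nonneg s k : 0 <= p_k s k.
Proof.
  unfold p_k, Rdiv. apply Rmult_le_pos; [apply binomR_nonneg|].
  left; apply Rinv_0_lt_compat, denom_pos.
Qed.

Lemma sum_p_k s : sum_f_R0 (p_k s) (Nat.div s 2) = 1.
Proof.
  unfold p_k, Rdiv. rewrite <- scal_sum.
  apply Rinv_l, Rgt_not_eq, denom_pos.
Qed.

Lemma second_moment_p_k_le s : (0 < s)%nat ->
  sum_f_R0 (fun k => (INR k - c0 * INR s) ^ 2 * p_k s k) (Nat.div s 2) <= 2 * INR s.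
Proof.
  intros Hs. pose proof (denom_pos s) as HN.
  unfold p_k, Rdiv.
  rewrite (sum_eq _ (fun k => (INR k - c0 * INR s) ^ 2 * binomR (s - k) k * / denom s))
    by (intros; ring).
  rewrite <- scal_sum.
  apply Rmult_le_reg_l with (denom s); [exact HN|].
  rewrite <- Rmult_assoc, Rinv_r, Rmult_1_l by lra.
  pose proof (second_moment_le s Hs). lra.
Qed.

Lemma t_k_sq_le s k : (0 < s)%nat ->
  t_k s k ^ 2 <= 50 * ((INR k - c0 * INR s) ^ 2 + 1) / INR s.
Proof.
  intros Hs. unfold t_k.
  assert (HS : 0 < INR s) by (apply lt_0_INR; lia).
  set (P := Rpower 5 (3 / 4)).
  assert (HP : 0 < P < 5).
  { split; [apply exp_pos|].
    unfold P; rewrite <- (Rpower_1 5) at 2 by lra. apply Rpower_lt; lra. }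
  pose proof (k0_bounds s) as Hk0.
  assert (Hdist : (INR k - IZR (k0 s)) ^ 2 <= 2 * (INR k - c0 * INR s) ^ 2 + 2).
  { pose proof (pow2_ge_0 (INR k - c0 * INR s - (c0 * INR s - IZR (k0 s)))). nra. }
  assert (Hsq : sqrt (INR s) ^ 2 = INR s) by (rewrite <- Rsqr_pow2; apply Rsqr_sqrt; lra).
  assert (0 < sqrt (INR s)) by (apply sqrt_lt_R0; exact HS).
  replace ((P * (INR k - IZR (k0 s)) / sqrt (INR s)) ^ 2)
    with (P ^ 2 * (INR k - IZR (k0 s)) ^ 2 / INR s).
  2: { set (q := sqrt (INR s)) in *. rewrite <- Hsq. field. lra. }
  unfold Rdiv. apply Rmult_le_compat_r; [left; apply Rinv_0_lt_compat; exact HS|].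
  assert (P ^ 2 <= 25) by nra.
  pose proof (pow2_ge_0 (INR k - IZR (k0 s))). nra.
Qed.

Theorem lemma6 : exists K0 : R, forall s : nat, (0 < s)%nat ->
  sum_f_R0 (fun k => (1 + (t_k s k) ^ 2) * p_k s k) (Nat.div s 2) <= K0.
Proof.
  exists 151. intros s Hs.
  set (S := INR s). set (c := 50 / S).
  assert (HS : 1 <= S) by (apply (le_INR 1); lia).
  assert (Hc : 0 <= c <= 50).
  { unfold c; split; [apply Rle_mult_inv_pos; lra|].
    rewrite <- (Rmult_1_r 50) at 2. unfold Rdiv; apply Rmult_le_compat_l; [lra|].
    rewrite <- Rinv_1. apply Rinv_le_contravar; lra. }
  apply Rle_trans with (sum_f_R0 (fun k =>
    p_k s k * (1 + c) + (INR k - c0 * S) ^ 2 * p_k s k * c) (Nat.div s 2)).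
  - apply sum_Rle; intros k _.
    pose proof (t_k_sq_le s k Hs) as Ht; fold S in Ht. pose proof (p_k_nonneg s k) as Hp.
    replace (50 * ((INR k - c0 * S) ^ 2 + 1) / S) with (c * ((INR k - c0 * S) ^ 2 + 1))
      in Ht by (unfold c, Rdiv; ring).
    pose proof (Rmult_le_compat_r (p_k s k) _ _ Hp Ht). lra.
  - rewrite plus_sum, <- !scal_sum, sum_p_k.
    pose proof (second_moment_p_k_le s Hs) as Hvar; fold S in Hvar.
    assert (c * (2 * S) = 100) by (unfold c; field; lra).
    nra.
Qed.
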